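(* For each $n\in\mathbb{N}$ let $A_n\subseteq\mathcal{R}$ be L-measurable, and suppose $\lim_{N\to\infty}M\big(\bigcup_{n=1}^N A_n\big)$ exists in $\mathcal{R}$. Then $\bigcup_{n=1}^\infty A_n$ is L-measurable.
   Context: $\mathcal{R}$ denotes the Levi-Civita field: functions $x:\mathbb{Q}\to\mathbb{R}$ with left-finite support, with componentwise addition and formal power series multiplication, ordered by $x>0$ iff $x\ne0$ and $x[\min\operatorname{supp}x]>0$; it is a non-Archimedean ordered field extension of $\mathbb{R}$, Cauchy complete in the order topology, in which all limits and series are taken (a series $\sum a_n$ converges iff $a_n\to0$). An interval is a set $[a,b],[a,b),(a,b]$ or $(a,b)$ with $a<b$ in $\mathcal{R}$, of length $l=b-a$. A cover of $A\subseteq\mathcal{R}$ is a sequence of intervals $(S_n)_{n\ge1}$ with $A\subseteq\bigcup_n S_n$ and $\sum_n l(S_n)$ convergent in $\mathcal{R}$. $A$ is called outer measurable if the infimum $\inf\{\sum_n l(S_n): (S_n)\text{ a cover of }A\}$ exists in $\mathcal{R}$; this infimum is then called the outer measure $M_u(A)$. An outer measurable set $A\subseteq\mathcal{R}$ is L-measurable if for every outer measurable $B\subseteq\mathcal{R}$ both $A\cap B$ and $A^c\cap B$ (where $A^c=\mathcal{R}\setminus A$) are outer measurable and $M_u(B)=M_u(A\cap B)+M_u(A^c\cap B)$; then its L-measure is $M(A):=M_u(A)$. Finite unions of L-measurable sets are L-measurable, so $M(\bigcup_{n=1}^N A_n)$ is defined. *)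

(* The Levi-Civita field over an arbitrary realType R
   (all realTypes are isomorphic to the classical reals). *)
From HB Require Import structures.
From mathcomp Require Import all_boot all_order all_algebra.
From mathcomp Require Import all_classical all_reals.
Set Implicit Arguments. Unset Strict Implicit. Unset Printing Implicit Defensive.
Import Order.TTheory GRing.Theory Num.Theory.
Local Open Scope classical_set_scope.
Local Open Scope ring_scope.

Section LeviCivita.
Variable R : realType.

Definition left_finite (x : rat -> R) : Prop :=
  forall q : rat, finite_set [set r | x r != 0 /\ r < q].

Record LC := MkLC { lc_val : rat -> R; lc_lf : left_finite lc_val }.

Lemma left_finite0 : left_finite (fun _ => 0).
Proof.
move=> q; apply: (sub_finite_set _ (finite_set0 rat)).
by move=> r /= []; rewrite eqxx.
Qed.

Lemma left_finite_add (x y : rat -> R) :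
  left_finite x -> left_finite y -> left_finite (fun r => x r + y r).
Proof.
move=> hx hy q.
apply: (sub_finite_set (B := [set r | x r != 0 /\ r < q] `|` [set r | y r != 0 /\ r < q])).
  move=> r /= [h hq]; case: (eqVneq (x r) 0) => hxr; last by left.
  by right; split=> //; move: h; rewrite hxr add0r.
by rewrite finite_setU; split.
Qed.

Lemma left_finite_opp (x : rat -> R) : left_finite x -> left_finite (fun r => - x r).
Proof.
move=> hx q; apply: (sub_finite_set _ (hx q)).
by move=> r /= [h hq]; split=> //; rewrite -oppr_eq0.
Qed.

Definition lc0 : LC := MkLC left_finite0.
Definition lc_add (x y : LC) : LC := MkLC (left_finite_add (lc_lf x) (lc_lf y)).
Definition lc_opp (x : LC) : LC := MkLC (left_finite_opp (lc_lf x)).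
Definition lc_sub (x y : LC) : LC := lc_add x (lc_opp y).

(* x > 0 iff x <> 0 and x[min supp x] > 0 (min supp exists by left-finiteness) *)
Definition lc_pos (x : LC) : Prop :=
  exists q : rat, 0 < lc_val x q /\ forall r : rat, r < q -> lc_val x r = 0.
Definition lc_lt (x y : LC) : Prop := lc_pos (lc_sub y x).
Definition lc_le (x y : LC) : Prop := lc_lt x y \/ x = y.

Definition lc_cvg (u : nat -> LC) (l : LC) : Prop :=
  forall a b : LC, lc_lt a l -> lc_lt l b ->
    exists N : nat, forall n : nat, (N <= n)%N -> lc_lt a (u n) /\ lc_lt (u n) b.

Fixpoint lc_psum (f : nat -> LC) (n : nat) : LC :=
  match n with O => lc0 | S m => lc_add (lc_psum f m) (f m) end.

Definition lc_series_to (f : nat -> LC) (s : LC) : Prop := lc_cvg (lc_psum f) s.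

Record interval := MkInterval { ia : LC; ib : LC; ia_closed : bool; ib_closed : bool }.
Definition is_interval (I : interval) : Prop := lc_lt (ia I) (ib I).
Definition interval_set (I : interval) : set LC :=
  [set x | (if ia_closed I then lc_le (ia I) x else lc_lt (ia I) x) /\
           (if ib_closed I then lc_le x (ib I) else lc_lt x (ib I))].
Definition ilength (I : interval) : LC := lc_sub (ib I) (ia I).

Definition cover_with_sum (A : set LC) (S : nat -> interval) (s : LC) : Prop :=
  (forall n, is_interval (S n)) /\
  A `<=` \bigcup_n interval_set (S n) /\
  lc_series_to (fun n => ilength (S n)) s.

Definition cover_sums (A : set LC) : set LC :=
  [set s | exists S : nat -> interval, cover_with_sum A S s].

Definition lc_is_inf (E : set LC) (m : LC) : Prop :=
  (forall s, E s -> lc_le m s) /\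
  (forall m', (forall s, E s -> lc_le m' s) -> lc_le m' m).

Definition outer_measure (A : set LC) (m : LC) : Prop := lc_is_inf (cover_sums A) m.
Definition outer_measurable (A : set LC) : Prop := exists m, outer_measure A m.

Definition L_measurable (A : set LC) : Prop :=
  outer_measurable A /\
  forall (B : set LC) (mB : LC), outer_measure B mB ->
    exists m1 m2 : LC, outer_measure (A `&` B) m1 /\ outer_measure (~` A `&` B) m2 /\
                      mB = lc_add m1 m2.

End LeviCivita.

From Pilot Require Import Defs.
From HB Require Import structures.
From mathcomp Require Import all_boot all_order all_algebra.
From mathcomp Require Import all_classical all_reals.
From mathcomp Require Import ring lra zify.
From Stdlib Require Cantor.
Set Implicit Arguments. Unset Strict Implicit. Unset Printing Implicit Defensive.
Import Order.TTheory GRing.Theory Num.Theory.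
Local Open Scope classical_set_scope.
Local Open Scope ring_scope.

(* Let U N = A 0 u ... u A N and fresh N = A N \ U (N-1) (the points first met
   in A N).  For a test set B of outer measure mB, the L-measurability of
   each A n splits B additively along every U N, and the increments
   M_u(U (N+1) n B) - M_u(U N n B) are the outer measures of fresh (N+1) n B.
   These increments are bounded by those of M_u(U N), which tend to zero, so
   in the non-Archimedean but Cauchy complete field they are summable: the
   traces M_u(U N n B) converge to some lam.  Covering the union by the fresh
   parts and using near-optimal covers with summable errors gives
   M_u((u A) n B) = lam, and then M_u(~(u A) n B) = mB - lam. *)

Lemma seq_has_min (d : Order.disp_t) (T : orderType d) (s : seq T) (a : T) :
  a \in s -> exists2 m, m \in s & forall y, y \in s -> (m <= y)%O.
Proof.
move=> a_s; have := sort_sorted (@le_total _ T) s.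
have mem_sorted := perm_mem (permEl (perm_sort <=%O s)).
case: (sort _ s) mem_sorted => [|m t] mem_sorted sorted_s.
  by move: a_s; rewrite -mem_sorted.
exists m; first by rewrite -mem_sorted mem_head.
move=> y; rewrite -mem_sorted inE => /predU1P [->//|y_t].
by move/allP: (order_path_min (@le_trans _ T) sorted_s) => /(_ y y_t).
Qed.

Section LeviCivitaOrder.
Variable R : realType.
Local Notation LC := (LC R).
Implicit Types x y z : LC.

Lemma lc_ext x y : (forall r, lc_val x r = lc_val y r) -> x = y.
Proof.
case: x y => [fx hx] [fy hy] /= h.
have e : fx = fy by apply: funext.
subst fy; by rewrite (Prop_irrelevance hx hy).
Qed.

(* x has no support below q, i.e. x = O(d^q) for the infinitesimal d. *)
Definition vanishes_below x (q : rat) := forall r, r < q -> lc_val x r = 0.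

Lemma lc_leading x r : lc_val x r != 0 ->
  exists q, lc_val x q != 0 /\ vanishes_below x q.
Proof.
move=> xr; have /finite_seqP [s es] := lc_lf x (r + 1).
have r_s : r \in s by have : [set` s] r by rewrite -es; split; rewrite ?ltrDl.
have [m m_s m_min] := seq_has_min r_s.
have : [set` s] m by []; rewrite -es => -[xm _]; exists m; split => // t tm.
apply/eqP/negPn/negP => xt.
have t_s : t \in s.
  suff : [set` s] t by []; rewrite -es; split => //.
  by apply: lt_le_trans tm (le_trans (m_min r r_s) _); rewrite lerDl.
by have := m_min t t_s; rewrite leNgt tm.
Qed.


Lemma lc_pos_leading x q :
  lc_pos x -> vanishes_below x q -> lc_val x q != 0 -> 0 < lc_val x q.
Proof.
move=> [q1 [x_q1 below_q1]] below_q xq.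
case: (ltgtP q1 q) => [q1q|qq1|<-//]; first by rewrite below_q // ltxx in x_q1.
by rewrite below_q1 // eqxx in xq.
Qed.

Lemma lc_pos_add x y : lc_pos x -> lc_pos y -> lc_pos (lc_add x y).
Proof.
move=> [q1 [x_q1 below1]] [q2 [y_q2 below2]].
case: (ltgtP q1 q2) => [q12|q21|q12]; last subst q2.
- exists q1; split => [|r rq1] /=; first by rewrite below2 // addr0.
  by rewrite below1 // below2 ?addr0 //; exact: lt_trans q12.
- exists q2; split => [|r rq2] /=; first by rewrite below1 // add0r.
  by rewrite below1 ?below2 ?addr0 //; exact: lt_trans q21.
- exists q1; split => [|r rq1] /=; first by rewrite addr_gt0.
  by rewrite below1 // below2 // addr0.
Qed.

Lemma lc_trichotomy x : lc_pos x \/ x = lc0 R \/ lc_pos (lc_opp x).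
Proof.
case: (pselect (exists r, lc_val x r != 0)) => [[r xr]|x0]; last first.
  right; left; apply: lc_ext => r /=.
  by apply/eqP/negPn/negP => xr; apply: x0; exists r.
have [q [xq below]] := lc_leading xr.
case: (ltgtP (lc_val x q) 0) => [xq_neg|xq_pos|xq0]; last by rewrite xq0 eqxx in xq.
  right; right; exists q; split => [|s sq] /=; first by rewrite oppr_gt0.
  by rewrite below // oppr0.
by left; exists q.
Qed.

Lemma lc_pos_congr x y : lc_pos x -> (forall r, lc_val x r = lc_val y r) -> lc_pos y.
Proof. by move=> h /lc_ext <-. Qed.

End LeviCivitaOrder.

(* Transport a positivity (or strict order) fact along a coefficientwise ring
   identity. *)
Ltac lc_transport h := apply: (lc_pos_congr h) => ? /=; ring.
Ltac lc_ring := apply: lc_ext => ? /=; ring.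

Section LeviCivitaOrderedField.
Variable R : realType.
Local Notation LC := (LC R).
Local Notation z0 := (lc0 R).
Implicit Types a b c d x y z : LC.

Lemma llt_irr x : ~ lc_lt x x.
Proof.
by move=> h; have [q [/= + _]] := h; rewrite subrr ltxx.
Qed.

Lemma llt_trans x y z : lc_lt x y -> lc_lt y z -> lc_lt x z.
Proof. by move=> xy yz; have h := lc_pos_add yz xy; lc_transport h. Qed.

Lemma llt_asym x y : lc_lt x y -> lc_lt y x -> False.
Proof. by move=> xy yx; apply: (llt_irr (llt_trans xy yx)). Qed.

Lemma llt_total x y : lc_lt x y \/ x = y \/ lc_lt y x.
Proof.
case: (lc_trichotomy (lc_sub y x)) => [h|[h|h]]; first by left.
  right; left; apply: lc_ext => r; have /= /eqP := f_equal (fun u => lc_val u r) h.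
  by rewrite subr_eq0 => /eqP.
by right; right; lc_transport h.
Qed.

Lemma lle_refl x : lc_le x x. Proof. by right. Qed.

Lemma lle_lt_trans x y z : lc_le x y -> lc_lt y z -> lc_lt x z.
Proof. by case=> [xy|->] //; exact: llt_trans. Qed.

Lemma llt_le_trans x y z : lc_lt x y -> lc_le y z -> lc_lt x z.
Proof. by move=> xy [yz|<-] //; exact: llt_trans yz. Qed.

Lemma lle_trans x y z : lc_le x y -> lc_le y z -> lc_le x z.
Proof. by case=> [xy|->] // yz; left; exact: llt_le_trans yz. Qed.

Lemma lle_antisym x y : lc_le x y -> lc_le y x -> x = y.
Proof. by case=> [xy|//] [yx|//]; case: (llt_asym xy yx). Qed.

Lemma lnot_lt_le x y : ~ lc_lt y x -> lc_le x y.
Proof. by move=> h; case: (llt_total x y) => [|[|]]; [left|right|]. Qed.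

Lemma llt_not_le x y : lc_lt x y -> ~ lc_le y x.
Proof. by move=> xy [yx|e]; [exact: llt_asym xy yx|subst; exact: llt_irr xy]. Qed.

Lemma llt_addr x y z : lc_lt x y -> lc_lt (lc_add x z) (lc_add y z).
Proof. by move=> h; lc_transport h. Qed.

Lemma llt_addl x y z : lc_lt x y -> lc_lt (lc_add z x) (lc_add z y).
Proof. by move=> h; lc_transport h. Qed.

Lemma lle_addr x y z : lc_le x y -> lc_le (lc_add x z) (lc_add y z).
Proof. by case=> [h|->]; [left; exact: llt_addr|right]. Qed.

Lemma lle_addl x y z : lc_le x y -> lc_le (lc_add z x) (lc_add z y).
Proof. by case=> [h|->]; [left; exact: llt_addl|right]. Qed.

Lemma llt_add a b c d : lc_lt a b -> lc_lt c d -> lc_lt (lc_add a c) (lc_add b d).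
Proof. by move=> ab cd; have h := lc_pos_add ab cd; lc_transport h. Qed.

Lemma lle_add a b c d : lc_le a b -> lc_le c d -> lc_le (lc_add a c) (lc_add b d).
Proof. by move=> ab cd; apply: (lle_trans (lle_addr c ab)); exact: lle_addl. Qed.

Lemma llt_opp x y : lc_lt x y -> lc_lt (lc_opp y) (lc_opp x).
Proof. by move=> h; lc_transport h. Qed.

Lemma lle_opp x y : lc_le x y -> lc_le (lc_opp y) (lc_opp x).
Proof. by case=> [h|->]; [left; exact: llt_opp|right]. Qed.

Lemma lpos_gt0 x : lc_pos x -> lc_lt z0 x.
Proof. by move=> h; lc_transport h. Qed.

Lemma lgt0_pos x : lc_lt z0 x -> lc_pos x.
Proof. by move=> h; lc_transport h. Qed.

Lemma llt_subr_gt0 x y : lc_lt x y -> lc_lt z0 (lc_sub y x).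
Proof. by move=> h; lc_transport h. Qed.

Lemma llt_congr x y x' y' : lc_lt x y -> (forall r, lc_val x r = lc_val x' r) ->
  (forall r, lc_val y r = lc_val y' r) -> lc_lt x' y'.
Proof. by move=> h /lc_ext <- /lc_ext <-. Qed.

Lemma lle_congr x y x' y' : lc_le x y -> (forall r, lc_val x r = lc_val x' r) ->
  (forall r, lc_val y r = lc_val y' r) -> lc_le x' y'.
Proof. by move=> h /lc_ext <- /lc_ext <-. Qed.

End LeviCivitaOrderedField.

Section Smallness.
Variable R : realType.
Local Notation LC := (LC R).
Local Notation z0 := (lc0 R).
Implicit Types e x y : LC.

Lemma monomial_left_finite (q : rat) :
  left_finite (fun r => if r == q then (1 : R) else 0).
Proof.
move=> p; apply: (sub_finite_set _ (finite_set1 q)) => r /= [].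
by case: (r =P q) => // _; rewrite eqxx.
Qed.

(* The monomial d^q, where d is the positive infinitesimal d^1. *)
Definition monomial (q : rat) : LC := MkLC (monomial_left_finite q).

Lemma monomial_gt0 (q : rat) : lc_lt z0 (monomial q).
Proof.
apply: lpos_gt0; exists q; split => [|r rq] /=; first by rewrite eqxx ltr01.
by rewrite (lt_eqF rq).
Qed.

Lemma monomial_vanishes_below (q t : rat) : q <= t -> vanishes_below (monomial t) q.
Proof. by move=> qt r rq /=; rewrite (lt_eqF (lt_le_trans rq qt)). Qed.

Definition small e x := lc_lt x e /\ lc_lt (lc_opp e) x.

(* Every positive e bounds all elements vanishing below some exponent q... *)
Lemma gt0_bounds_vanishing e : lc_lt z0 e ->
  exists q, forall x, vanishes_below x q -> small e x.
Proof.
move=> /lgt0_pos [q [eq below_e]]; exists (q + 1) => x below_x.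
have xq : lc_val x q = 0 by apply: below_x; rewrite ltrDl.
have x_below r : r < q -> lc_val x r = 0.
  by move=> rq; apply: below_x; apply: (lt_trans rq); rewrite ltrDl.
split; exists q; split => [|r rq] /=; rewrite ?xq; try lra;
  by rewrite below_e // x_below //; ring.
Qed.

(* ...and conversely elements smaller than some positive e vanish below q:
   the order topology is the topology of the valuation. *)
Lemma small_vanishes_below (q : rat) :
  exists2 e, lc_lt z0 e & forall x, small e x -> vanishes_below x q.
Proof.
exists (monomial q) => [|x [x_lt x_gt] r rq]; first exact: monomial_gt0.
apply/eqP/negPn/negP => xr; have [r0 [xr0 below_r0]] := lc_leading xr.
have r0q : r0 < q.
  by rewrite ltNge; apply/negP => qr0; move: xr; rewrite below_r0 ?eqxx // (lt_le_trans rq).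
have p1 : 0 < lc_val (lc_sub (monomial q) x) r0.
  apply: lc_pos_leading x_lt _ _ => [s sr0|] /=.
    by rewrite below_r0 // (lt_eqF (lt_trans sr0 r0q)); ring.
  by rewrite (lt_eqF r0q) add0r oppr_eq0.
have p2 : 0 < lc_val (lc_sub x (lc_opp (monomial q))) r0.
  apply: lc_pos_leading x_gt _ _ => [s sr0|] /=.
    by rewrite below_r0 // (lt_eqF (lt_trans sr0 r0q)); ring.
  by rewrite (lt_eqF r0q) !oppr0 addr0.
by move: p1 p2; rewrite /= (lt_eqF r0q); lra.
Qed.

Lemma small_add e e' x y : small e x -> small e' y -> small (lc_add e e') (lc_add x y).
Proof.
move=> [xe ex] [ye ey]; split; first exact: llt_add.
by apply: (llt_congr (llt_add ex ey)) => r //=; ring.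
Qed.

Lemma small_le e e' x : small e x -> lc_le e e' -> small e' x.
Proof.
move=> [xe ex] ee'; split; first exact: llt_le_trans xe ee'.
exact: lle_lt_trans (lle_opp ee') ex.
Qed.

Lemma small_opp e x : small e x -> small e (lc_opp x).
Proof.
move=> [xe ex]; split; last exact: llt_opp.
by apply: (llt_congr (llt_opp ex)) => r //=; ring.
Qed.

Lemma small0 e : lc_lt z0 e -> small e z0.
Proof. by move=> e_gt0; split => //; apply: (llt_congr (llt_opp e_gt0)) => r //=; ring. Qed.

Lemma small_congr e x x' : small e x -> (forall r, lc_val x r = lc_val x' r) -> small e x'.
Proof. by move=> h /lc_ext <-. Qed.

Lemma lc_half e : lc_lt z0 e -> exists2 h, lc_lt z0 h & lc_lt (lc_add h h) e.
Proof.
move=> e_gt0; have [q bound] := gt0_bounds_vanishing e_gt0.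
exists (monomial q); first exact: monomial_gt0.
have [] := bound (lc_add (monomial q) (monomial q)) => // r rq /=.
by rewrite (lt_eqF rq) addr0.
Qed.

End Smallness.

Section Convergence.
Variable R : realType.
Local Notation LC := (LC R).
Local Notation z0 := (lc0 R).
Implicit Types c e h l x : LC.
Implicit Types u v : nat -> LC.

Definition cvg_eps u l := forall e, lc_lt z0 e ->
  exists N, forall n, (N <= n)%N -> small e (lc_sub (u n) l).

Lemma lc_cvgP u l : lc_cvg u l <-> cvg_eps u l.
Proof.
split=> [u_l e e_gt0|u_l a b al lb].
  have le_l : lc_lt (lc_sub l e) l by lc_transport (llt_addl l (llt_opp e_gt0)).
  have l_le : lc_lt l (lc_add l e) by lc_transport (llt_addl l e_gt0).
  have [N uN] := u_l _ _ le_l l_le; exists N => n /uN [a_u u_b].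
  by split; [lc_transport (llt_addr (lc_opp l) u_b)|lc_transport (llt_addr (lc_opp l) a_u)].
have [e [e_gt0 e_la e_bl]] :
    exists e, [/\ lc_lt z0 e, lc_le e (lc_sub l a) & lc_le e (lc_sub b l)].
  have [la lb'] := (llt_subr_gt0 al, llt_subr_gt0 lb).
  case: (llt_total (lc_sub l a) (lc_sub b l)) => [h|[h|h]].
  - by exists (lc_sub l a); split => //; [exact: lle_refl|left].
  - by exists (lc_sub l a); split => //; [exact: lle_refl|rewrite h; exact: lle_refl].
  - by exists (lc_sub b l); split => //; [left|exact: lle_refl].
have [N uN] := u_l e e_gt0; exists N => n /uN [u_lt u_gt]; split.
  by lc_transport (llt_addr l (lle_lt_trans (lle_opp e_la) u_gt)).
by lc_transport (llt_addr l (llt_le_trans u_lt e_bl)).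
Qed.

Lemma cvg_eps_congr u v l : cvg_eps u l -> (forall n, u n = v n) -> cvg_eps v l.
Proof. by move=> u_l /funext <-. Qed.

Lemma cvg_eps_const c : cvg_eps (fun _ => c) c.
Proof. by move=> e e_gt0; exists 0%N => n _; apply: (small_congr (small0 e_gt0)) => r /=; ring. Qed.

Lemma cvg_eps_add u v l l' : cvg_eps u l -> cvg_eps v l' ->
  cvg_eps (fun n => lc_add (u n) (v n)) (lc_add l l').
Proof.
move=> u_l v_l' e e_gt0; have [h h_gt0 hh_e] := lc_half e_gt0.
have [N1 uN1] := u_l h h_gt0; have [N2 vN2] := v_l' h h_gt0.
exists (maxn N1 N2) => n; rewrite geq_max => /andP [nN1 nN2].
have s := small_add (uN1 n nN1) (vN2 n nN2).
by apply: (small_congr (small_le s (or_introl hh_e))) => r /=; ring.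
Qed.

Lemma cvg_eps_opp u l : cvg_eps u l -> cvg_eps (fun n => lc_opp (u n)) (lc_opp l).
Proof.
move=> u_l e e_gt0; have [N uN] := u_l e e_gt0; exists N => n /uN s.
by apply: (small_congr (small_opp s)) => r /=; ring.
Qed.

Lemma cvg_eps_shift u l k : cvg_eps u l -> cvg_eps (fun n => u (n + k)%N) l.
Proof.
move=> u_l e e_gt0; have [N uN] := u_l e e_gt0; exists N => n nN; apply: uN.
exact: leq_trans nN (leq_addr _ _).
Qed.

Lemma cvg_eps_unshift u l : cvg_eps (fun n => u n.+1) l -> cvg_eps u l.
Proof.
move=> u_l e e_gt0; have [N uN] := u_l e e_gt0.
by exists N.+1 => -[//|n] nN; exact: uN.
Qed.

Lemma cvg_eps_le u v l l' : (forall n, lc_le (u n) (v n)) ->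
  cvg_eps u l -> cvg_eps v l' -> lc_le l l'.
Proof.
move=> uv u_l v_l'; apply: lnot_lt_le => l'l.
have [h h_gt0 hh] := lc_half (llt_subr_gt0 l'l).
have [N1 uN1] := u_l h h_gt0; have [N2 vN2] := v_l' h h_gt0.
have [_ u_gt] := uN1 _ (leq_maxl N1 N2); have [v_lt _] := vN2 _ (leq_maxr N1 N2).
have vu : lc_lt (v (maxn N1 N2)) (u (maxn N1 N2)).
  by lc_transport (lc_pos_add (lc_pos_add u_gt v_lt) (lgt0_pos (llt_subr_gt0 hh))).
exact: llt_not_le vu (uv _).
Qed.

Lemma cvg_eps_uniq u l l' : cvg_eps u l -> cvg_eps u l' -> l = l'.
Proof.
by move=> u_l u_l'; apply: lle_antisym; apply: (cvg_eps_le (u := u) (v := u)) => // n;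
  exact: lle_refl.
Qed.

Lemma cvg_eps_lb c u l : (forall n, lc_le c (u n)) -> cvg_eps u l -> lc_le c l.
Proof. by move=> cu; apply: cvg_eps_le cu (cvg_eps_const c). Qed.

Lemma cvg_eps_ub c u l : (forall n, lc_le (u n) c) -> cvg_eps u l -> lc_le l c.
Proof. by move=> uc u_l; apply: cvg_eps_le uc u_l (cvg_eps_const c). Qed.

Lemma cvg_eps_interleave u l :
  cvg_eps (fun k => u k.*2) l -> cvg_eps (fun k => u k.*2.+1) l -> cvg_eps u l.
Proof.
move=> even_l odd_l e e_gt0.
have [N1 uN1] := even_l e e_gt0; have [N2 uN2] := odd_l e e_gt0.
exists (maxn N1 N2).*2 => n; rewrite -(odd_double_half n).
case: (odd n) => /=; rewrite ?add1n ?add0n ?leq_Sdouble ?leq_double geq_max => /andP [].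
  by move=> _; exact: uN2.
by move=> + _; exact: uN1.
Qed.

Definition tends0 u := forall q, exists N, forall n, (N <= n)%N -> vanishes_below (u n) q.

Lemma tends0P u : tends0 u <-> cvg_eps u z0.
Proof.
split=> [u0 e e_gt0|u0 q].
  have [q bound] := gt0_bounds_vanishing e_gt0; have [N uN] := u0 q.
  by exists N => n /uN /bound s; apply: (small_congr s) => r /=; ring.
have [e e_gt0 vanish] := small_vanishes_below R q; have [N uN] := u0 e e_gt0.
by exists N => n /uN s; apply: vanish; apply: (small_congr s) => r /=; ring.
Qed.

Lemma tends0_add u v : tends0 u -> tends0 v -> tends0 (fun n => lc_add (u n) (v n)).
Proof.
move=> u0 v0 q; have [N1 uN1] := u0 q; have [N2 vN2] := v0 q.
exists (maxn N1 N2) => n; rewrite geq_max => /andP [/uN1 u_q /vN2 v_q] r rq /=.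
by rewrite u_q // v_q // addr0.
Qed.

Lemma cvg_eps_diff u l : cvg_eps u l -> tends0 (fun n => lc_sub (u n.+1) (u n)).
Proof.
move=> u_l; apply/tends0P.
have -> : z0 = lc_add l (lc_opp l) by lc_ring.
by apply: (cvg_eps_congr (cvg_eps_add (cvg_eps_shift 1 u_l) (cvg_eps_opp u_l))) => n;
  rewrite addn1.
Qed.

End Convergence.

Section Series.
Variable R : realType.
Local Notation LC := (LC R).
Local Notation z0 := (lc0 R).
Implicit Types c d s : LC.
Implicit Types u v : nat -> LC.

Lemma psum_val u n r : lc_val (lc_psum u n) r = \sum_(i < n) lc_val (u i) r.
Proof. by elim: n => [|n IH]; rewrite ?big_ord0 // big_ord_recr /= IH. Qed.

Lemma psum_add u v n :
  lc_psum (fun k => lc_add (u k) (v k)) n = lc_add (lc_psum u n) (lc_psum v n).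
Proof. by apply: lc_ext => r; rewrite /= !psum_val -big_split. Qed.

Lemma psum_frozen u N q : (forall n, (N <= n)%N -> vanishes_below (u n) q) ->
  forall M, (N <= M)%N -> forall r, r < q -> lc_val (lc_psum u M) r = lc_val (lc_psum u N) r.
Proof.
move=> u_q M NM r rq; rewrite -(subnKC NM).
elim: (M - N)%N => [|k IH]; first by rewrite addn0.
by rewrite addnS /= IH u_q ?addr0 // leq_addr.
Qed.

Definition increments (p : nat -> LC) (N : nat) : LC :=
  if N is k.+1 then lc_sub (p k.+1) (p k) else p 0.

Lemma psum_increments p N : lc_psum (increments p) N.+1 = p N.
Proof. by elim: N => [|N /= IH]; [lc_ring|rewrite IH; lc_ring]. Qed.

Lemma increments_seriesP p l : cvg_eps (lc_psum (increments p)) l <-> cvg_eps p l.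
Proof.
split=> [inc_l|p_l].
  by apply: (cvg_eps_congr (cvg_eps_shift 1 inc_l)) => n; rewrite addn1 psum_increments.
by apply: cvg_eps_unshift; apply: (cvg_eps_congr p_l) => n; rewrite psum_increments.
Qed.

Lemma tends0_series_cvg u : tends0 u -> exists s, cvg_eps (lc_psum u) s /\
  forall r, exists N, forall M, (N <= M)%N -> lc_val s r = lc_val (lc_psum u M) r.
Proof.
move=> u0; pose Nq q := projT1 (cid (u0 q)).
have u_q q : forall n, (Nq q <= n)%N -> vanishes_below (u n) q := projT2 (cid (u0 q)).
pose sv r := lc_val (lc_psum u (Nq (r + 1))) r.
have sv_psum q r : r < q -> sv r = lc_val (lc_psum u (Nq q)) r.
  move=> rq; rewrite /sv -(psum_frozen (u_q (r + 1)) (leq_maxl _ (Nq q))) ?ltrDl //.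
  by rewrite (psum_frozen (u_q q) (leq_maxr (Nq (r + 1)) _)).
have sv_lf : left_finite sv.
  move=> q; apply: (sub_finite_set _ (lc_lf (lc_psum u (Nq q)) q)) => r /= [svr rq].
  by rewrite -sv_psum.
exists (MkLC sv_lf); split => [e e_gt0|r].
  have [q bound] := gt0_bounds_vanishing e_gt0; exists (Nq q) => n n_q.
  apply: bound => r rq /=.
  by rewrite (psum_frozen (u_q q) n_q rq) -sv_psum //; ring.
exists (Nq (r + 1)) => M M_r /=.
by rewrite /sv (psum_frozen (u_q (r + 1)) M_r) // ltrDl.
Qed.

Lemma series_cvg_tends0 u s : cvg_eps (lc_psum u) s -> tends0 u /\
  forall r, exists N, forall M, (N <= M)%N -> lc_val s r = lc_val (lc_psum u M) r.
Proof.
move=> u_s; have u0 : tends0 u.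
  have -> : u = (fun n => lc_sub (lc_psum u n.+1) (lc_psum u n)) by apply: funext => n; lc_ring.
  exact: cvg_eps_diff u_s.
split => //; have [s' [u_s' coef]] := tends0_series_cvg u0.
by rewrite (cvg_eps_uniq u_s u_s').
Qed.

Lemma psum_ge0 u : (forall n, lc_le z0 (u n)) -> forall n, lc_le z0 (lc_psum u n).
Proof.
move=> u_ge0; elim=> [|n IH] /=; first exact: lle_refl.
by apply: (lle_congr (lle_add IH (u_ge0 n))) => r //=; ring.
Qed.

Lemma psum_le u v : (forall n, lc_le (u n) (v n)) -> forall n, lc_le (lc_psum u n) (lc_psum v n).
Proof. by move=> uv; elim=> [|n IH] /=; [exact: lle_refl|exact: lle_add]. Qed.

Lemma psum_le_series u s : (forall n, lc_le z0 (u n)) -> cvg_eps (lc_psum u) s ->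
  forall n, lc_le (lc_psum u n) s.
Proof.
move=> u_ge0 u_s n; apply: (cvg_eps_lb _ (cvg_eps_shift n u_s)) => k.
elim: k => [|k IH]; first exact: lle_refl.
apply: (lle_trans IH); rewrite addSn /=.
by apply: (lle_congr (lle_addl _ (u_ge0 (k + n)%N))) => r //=; ring.
Qed.

Lemma term_le_series u s : (forall n, lc_le z0 (u n)) -> cvg_eps (lc_psum u) s ->
  forall j, lc_le (u j) s.
Proof.
move=> u_ge0 u_s j; apply: lle_trans (psum_le_series u_ge0 u_s j.+1) => /=.
by apply: (lle_congr (lle_addr (u j) (psum_ge0 u_ge0 j))) => r //=; ring.
Qed.

Lemma vanishes_below_squeeze c d q :
  lc_le z0 c -> lc_le c d -> vanishes_below d q -> vanishes_below c q.
Proof.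
move=> c_ge0 cd d_q r rq; apply/eqP/negPn/negP => cr.
have [r0 [cr0 below_r0]] := lc_leading cr.
have r0q : r0 < q.
  by rewrite ltNge; apply/negP => qr0; move: cr; rewrite below_r0 ?eqxx // (lt_le_trans rq).
case: c_ge0 => [c_gt0|c0]; last by move: cr0; rewrite -c0 eqxx.
have c_r0 := lc_pos_leading (lgt0_pos c_gt0) below_r0 cr0.
case: cd => [cd|cd]; last by move: cr; rewrite cd d_q ?eqxx.
have : 0 < lc_val (lc_sub d c) r0.
  apply: lc_pos_leading (lgt0_pos (llt_subr_gt0 cd)) _ _ => [s sr0|] /=.
    by rewrite below_r0 // d_q; [ring|exact: lt_trans sr0 r0q].
  by rewrite d_q // add0r oppr_eq0.
by rewrite /= d_q //; lra.
Qed.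

End Series.

Section OuterMeasure.
Variable R : realType.
Local Notation LC := (LC R).
Local Notation z0 := (lc0 R).
Implicit Types a b c m s : LC.
Implicit Types A B W X Y Z : set LC.

Lemma cover_sum_ge0 A S s : cover_with_sum A S s -> lc_le z0 s.
Proof.
move=> [S_int [_ /lc_cvgP S_s]]; apply: cvg_eps_lb S_s; apply: psum_ge0 => n.
by left; exact: llt_subr_gt0 (S_int n).
Qed.

Lemma outer_measure_ge0 A m : outer_measure A m -> lc_le z0 m.
Proof. by move=> [_ glb]; apply: glb => s [S /cover_sum_ge0]. Qed.

Lemma outer_measure_uniq A m m' : outer_measure A m -> outer_measure A m' -> m = m'.
Proof. by move=> [lb glb] [lb' glb']; apply: lle_antisym; [apply: glb'|apply: glb]. Qed.

Lemma outer_measure_lb A m s : outer_measure A m -> cover_sums A s -> lc_le m s.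
Proof. by move=> [lb _]; apply: lb. Qed.

Lemma cover_sums_sub A B s : A `<=` B -> cover_sums B s -> cover_sums A s.
Proof. by move=> AB [S [S_int [BS S_s]]]; exists S; do 2 split => //; exact: subset_trans BS. Qed.

Lemma outer_measure_mono A B a b :
  A `<=` B -> outer_measure A a -> outer_measure B b -> lc_le a b.
Proof.
move=> AB [lbA _] [_ glbB]; apply: glbB => s Bs; apply: lbA; exact: cover_sums_sub Bs.
Qed.

Lemma outer_measure_approx A m c : outer_measure A m -> lc_lt m c ->
  exists2 s, cover_sums A s & lc_lt s c.
Proof.
move=> [_ glb] mc; apply: contrapT => no_cover.
suff : lc_le c m by exact: llt_not_le mc.
apply: glb => s As.
by apply: lnot_lt_le => sc; apply: no_cover; exists s.
Qed.

Definition interleave (S T : nat -> Defs.interval R) (j : nat) : Defs.interval R :=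
  if odd j then T j./2 else S j./2.

Lemma psum_interleave (S T : nat -> Defs.interval R) k :
  lc_psum (fun j => ilength (interleave S T j)) k.*2 =
    lc_add (lc_psum (fun n => ilength (S n)) k) (lc_psum (fun n => ilength (T n)) k).
Proof.
elim: k => [|k IH]; first by lc_ring.
rewrite doubleS /= IH /interleave /= odd_double /= uphalf_double doubleK; lc_ring.
Qed.

Lemma cover_sums_union X Y s t :
  cover_sums X s -> cover_sums Y t -> cover_sums (X `|` Y) (lc_add s t).
Proof.
move=> [S [S_int [XS /lc_cvgP S_s]]] [T [T_int [YT /lc_cvgP T_t]]].
exists (interleave S T); split; first by move=> j; rewrite /interleave; case: odd.
split.
  move=> x [/XS [n _ Sx]|/YT [n _ Tx]].
    by exists n.*2 => //; rewrite /interleave odd_double doubleK.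
  by exists n.*2.+1 => //; rewrite /interleave /= odd_double /= uphalf_double.
apply/lc_cvgP; apply: cvg_eps_interleave.
  by apply: (cvg_eps_congr (cvg_eps_add S_s T_t)) => k; rewrite psum_interleave.
apply: (cvg_eps_congr (cvg_eps_add (cvg_eps_shift 1 S_s) T_t)) => k.
rewrite addn1 /= psum_interleave /interleave odd_double doubleK; lc_ring.
Qed.

Lemma outer_measure_squeeze B X Y W Z mB x y w :
  outer_measure B mB -> outer_measure X x -> outer_measure Y y -> outer_measure W w ->
  mB = lc_add (lc_add x y) w -> B `<=` Z `|` W -> Z `<=` X `|` Y ->
  outer_measure Z (lc_add x y).
Proof.
move=> hB hX hY hW mB_eq BZW ZXY; split=> [c Zc|m' m'_lb].
  have : lc_le (lc_sub mB c) w.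
    apply: (proj2 hW) => d Wd.
    have := outer_measure_lb hB (cover_sums_sub BZW (cover_sums_union Zc Wd)).
    by move=> /(lle_addr (lc_opp c)) h; apply: (lle_congr h) => r /=; ring.
  move=> /(lle_addr (lc_sub c w)); rewrite mB_eq => h.
  by apply: (lle_congr h) => r /=; ring.
have m'_x c2 : cover_sums Y c2 -> lc_le (lc_sub m' c2) x.
  move=> Yc2; apply: (proj2 hX) => c1 Xc1.
  have := m'_lb _ (cover_sums_sub ZXY (cover_sums_union Xc1 Yc2)).
  by move=> /(lle_addr (lc_opp c2)) h; apply: (lle_congr h) => r /=; ring.
have : lc_le (lc_sub m' x) y.
  apply: (proj2 hY) => c2 Yc2; have := lle_addr (lc_sub c2 x) (m'_x c2 Yc2).
  by move=> h; apply: (lle_congr h) => r /=; ring.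
by move=> /(lle_addr x) h; apply: (lle_congr h) => r /=; ring.
Qed.

Lemma outer_measure_complement B X (Y : nat -> set LC) (p : nat -> LC) mB lam :
  outer_measure B mB -> outer_measure (X `&` B) lam ->
  (forall N, ~` X `&` B `<=` Y N) -> (forall N, outer_measure (Y N) (lc_sub mB (p N))) ->
  cvg_eps p lam -> outer_measure (~` X `&` B) (lc_sub mB lam).
Proof.
move=> hB hXB XY hY p_lam; split=> [c Xc|m' m'_lb].
  have : lc_le (lc_sub mB c) lam.
    apply: (proj2 hXB) => d Xd.
    have B_cover : B `<=` (~` X `&` B) `|` (X `&` B).
      by move=> x Bx; case: (pselect (X x)) => Xx; [right|left].
    have := outer_measure_lb hB (cover_sums_sub B_cover (cover_sums_union Xc Xd)).
    by move=> /(lle_addr (lc_opp c)) h; apply: (lle_congr h) => r /=; ring.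
  by move=> /(lle_addr (lc_sub c lam)) h; apply: (lle_congr h) => r /=; ring.
apply: (cvg_eps_lb _ (cvg_eps_add (cvg_eps_const mB) (cvg_eps_opp p_lam))) => N.
by apply: (proj2 (hY N)) => s Ys; apply: m'_lb; exact: cover_sums_sub (XY N) Ys.
Qed.

End OuterMeasure.

Lemma sum_cantor_reindex (V : nmodType) (f : nat * nat -> V) N J M :
  (forall n j, ~~ ((n < N) && (j < J))%N -> f (n, j) = 0) ->
  (forall n j, (n < N)%N -> (j < J)%N -> (Cantor.to_nat (n, j) < M)%N) ->
  \sum_(m < M) f (Cantor.of_nat m) = \sum_(n < N) \sum_(j < J) f (n : nat, j : nat).
Proof.
move=> f0 rectM.
pose rect := [seq (n, j) | n <- index_iota 0 N, j <- index_iota 0 J].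
pose codes := [seq Cantor.to_nat p | p <- rect].
have -> : \sum_(n < N) \sum_(j < J) f (n : nat, j : nat) = \sum_(p <- rect) f p.
  by rewrite big_allpairs big_mkord; apply: eq_bigr => n _; rewrite big_mkord.
have -> : \sum_(p <- rect) f p = \sum_(m <- codes) f (Cantor.of_nat m).
  by rewrite big_map; apply: eq_bigr => p _; rewrite Cantor.cancel_of_to.
have codes_uniq : uniq codes.
  rewrite map_inj_uniq; last by move=> p q; exact: Cantor.to_nat_inj.
  by apply: allpairs_uniq; rewrite ?iota_uniq // => -[a b] [c d] _ _ /= [-> ->].
have codes_perm : perm_eq [seq m <- index_iota 0 M | m \in codes] codes.
  apply: uniq_perm; rewrite ?filter_uniq ?iota_uniq // => m.
  rewrite mem_filter; case m_codes: (m \in codes) => //=.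
  move: m_codes => /mapP [[n j] /allpairsP [[a b] [+ + /= [-> ->]]] ->].
  by rewrite !mem_index_iota /= => ha hb; exact: rectM.
rewrite -(perm_big _ codes_perm) big_filter big_mkcond big_mkord [RHS]big_mkcond /=.
apply: eq_bigr => m _; case m_codes: (nat_of_ord m \in codes) => //.
case e: (Cantor.of_nat m) => [n j]; apply: f0; apply/negP => /andP [hn hj].
move/negP: m_codes; apply; apply/mapP; exists (n, j); last by rewrite -e Cantor.cancel_to_of.
by apply: allpairs_f; rewrite mem_index_iota.
Qed.

Lemma cantor_bound N J n j : (n < N)%N -> (j < J)%N ->
  (Cantor.to_nat (n, j) < (N + J) * (N + J + 1))%N.
Proof. by move=> hn hj; have := Cantor.to_nat_spec n j; nia. Qed.

Lemma eventually_uniform (P : nat -> nat -> Prop) K :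
  (forall n, exists J, forall j, (J <= j)%N -> P n j) ->
  exists J, forall n j, (n < K)%N -> (J <= j)%N -> P n j.
Proof.
move=> ev; elim: K => [|K [J PJ]]; first by exists 0%N.
have [J' PJ'] := ev K; exists (maxn J J') => n j; rewrite ltnS leq_eqVlt geq_max.
by case/orP => [/eqP -> /andP [_]|nK /andP [Jj _]]; [exact: PJ'|exact: PJ].
Qed.

Section DoubleSeries.
Variable R : realType.
Local Notation LC := (LC R).
Local Notation z0 := (lc0 R).

Variables (l : nat -> nat -> LC) (c : nat -> LC) (total : LC).
Hypothesis l_ge0 : forall n j, lc_le z0 (l n j).
Hypothesis rows : forall n, cvg_eps (lc_psum (l n)) (c n).
Hypothesis columns : cvg_eps (lc_psum c) total.

Lemma double_series_rectangle q : exists N J, forall n j,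
  ~~ ((n < N) && (j < J))%N -> vanishes_below (l n j) q.
Proof.
have [N cN] := (series_cvg_tends0 columns).1 q.
have [J lJ] := eventually_uniform (P := fun n j => vanishes_below (l n j) q) N
  (fun n => (series_cvg_tends0 (rows n)).1 q).
exists N, J => n j; case: (ltnP n N) => /= [nN|Nn] rect.
  by apply: lJ => //; rewrite leqNgt.
exact: vanishes_below_squeeze (l_ge0 n j) (term_le_series (l_ge0 n) (rows n) j) (cN n Nn).
Qed.

Definition cantor_flatten (m : nat) : LC := l (Cantor.of_nat m).1 (Cantor.of_nat m).2.

Lemma cantor_flatten_tends0 : tends0 cantor_flatten.
Proof.
move=> q; have [N [J rect]] := double_series_rectangle q.
exists ((N + J) * (N + J + 1))%N => m big_m; rewrite /cantor_flatten.
case e: (Cantor.of_nat m) => [n j] /=; apply: rect; apply/negP => /andP [nN jJ].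
have := cantor_bound nN jJ; rewrite -e Cantor.cancel_to_of => m_small.
by move: (leq_trans m_small big_m); rewrite ltnn.
Qed.

Lemma cantor_flatten_series : cvg_eps (lc_psum cantor_flatten) total.
Proof.
have [G [G_cvg G_coef]] := tends0_series_cvg cantor_flatten_tends0.
suff -> : total = G by [].
apply: lc_ext => r; have [N [J rect]] := double_series_rectangle (r + 1).
have [K cK] := (series_cvg_tends0 columns).2 r.
pose N' := maxn N K.
have [J1 lJ1] := eventually_uniform
  (P := fun n j => lc_val (c n) r = lc_val (lc_psum (l n) j) r) N'
  (fun n => (series_cvg_tends0 (rows n)).2 r).
pose J' := maxn J J1; have [M1 GM1] := G_coef r.
pose M := maxn M1 ((N' + J') * (N' + J' + 1)).
rewrite (GM1 M (leq_maxl _ _)) (cK N' (leq_maxr _ _)) !psum_val.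
rewrite (sum_cantor_reindex (f := fun p => lc_val (l p.1 p.2) r) (N := N') (J := J')).
- by apply: eq_bigr => n _; rewrite (lJ1 n J' (ltn_ord n) (leq_maxr _ _)) psum_val.
- move=> n j outside; apply: (rect n j); last by rewrite ltrDl.
  by apply: contra outside => /andP [nN jJ]; rewrite (leq_trans nN (leq_maxl _ _))
    (leq_trans jJ (leq_maxl _ _)).
- by move=> n j nN jJ; exact: leq_trans (cantor_bound nN jJ) (leq_maxr _ _).
Qed.

End DoubleSeries.

Lemma cover_sums_bigcup (R : realType) (D : nat -> set (LC R)) (c : nat -> LC R) total :
  (forall N, cover_sums (D N) (c N)) -> cvg_eps (lc_psum c) total ->
  cover_sums (\bigcup_N D N) total.
Proof.
move=> D_c c_total; have [S S_cov] := choice D_c.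
pose len n j := ilength (S n j).
have len_ge0 n j : lc_le (lc0 R) (len n j) by left; exact: llt_subr_gt0 ((S_cov n).1 j).
have rows n : cvg_eps (lc_psum (len n)) (c n) by apply/lc_cvgP; exact: (S_cov n).2.2.
exists (fun m => S (Cantor.of_nat m).1 (Cantor.of_nat m).2); split.
  by move=> m; exact: (S_cov _).1.
split; last exact/lc_cvgP/(cantor_flatten_series len_ge0 rows c_total).
move=> x [N _ Dx]; have [j _ Sx] := (S_cov N).2.1 x Dx.
by exists (Cantor.to_nat (N, j)) => //; rewrite Cantor.cancel_of_to.
Qed.

Section Exhaustion.
Variable R : realType.
Local Notation LC := (LC R).
Local Notation z0 := (lc0 R).

Lemma small_error_series (e : LC) : lc_lt z0 e -> exists (ep : nat -> LC) E,
  [/\ forall N, lc_lt z0 (ep N), tends0 ep, cvg_eps (lc_psum ep) E & lc_lt E e].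
Proof.
move=> e_gt0; have [q0 bound] := gt0_bounds_vanishing e_gt0.
pose ep (N : nat) := monomial R (q0 + N%:R).
have ep0 : tends0 ep.
  move=> q; exists (Num.Def.archi_bound `|q - q0|) => n n_big.
  apply: monomial_vanishes_below.
  have := archi_boundP (normr_ge0 (q - q0)); have := ler_norm (q - q0).
  have : (Num.Def.archi_bound `|q - q0|)%:R <= n%:R :> rat by rewrite ler_nat.
  lra.
have [E [ep_E E_coef]] := tends0_series_cvg ep0.
exists ep, E; split => //; first by move=> N; exact: monomial_gt0.
apply: (proj1 (bound E _)) => r rq; have [K EK] := E_coef r.
rewrite (EK K (leqnn K)) psum_val big1 // => i _.
by rewrite /= (lt_eqF (lt_le_trans rq _)) // lerDl ler0n.
Qed.

Lemma outer_measure_exhaustion (U : set LC) (P D : nat -> set LC) (p d : nat -> LC) lam :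
  (forall N, outer_measure (P N) (p N)) -> (forall N, P N `<=` U) ->
  U `<=` \bigcup_N D N -> (forall N, outer_measure (D N) (d N)) ->
  cvg_eps (lc_psum d) lam -> cvg_eps p lam -> outer_measure U lam.
Proof.
move=> P_p PU UD D_d d_lam p_lam; split=> [s Us|m' m'_lb].
  apply: (cvg_eps_ub _ p_lam) => N.
  exact: outer_measure_lb (P_p N) (cover_sums_sub (PU N) Us).
apply: lnot_lt_le => lam_m'.
have [ep [E [ep_gt0 ep0 ep_E E_small]]] := small_error_series (llt_subr_gt0 lam_m').
have near_cover N : exists c, cover_sums (D N) c /\ lc_lt c (lc_add (d N) (ep N)).
  have : lc_lt (d N) (lc_add (d N) (ep N)) by lc_transport (llt_addl (d N) (ep_gt0 N)).
  by move=> /(outer_measure_approx (D_d N)) [c Dc c_lt]; exists c.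
have [c c_cov] := choice near_cover.
have c0 : tends0 c.
  move=> q; have [N dN] := tends0_add (series_cvg_tends0 d_lam).1 ep0 q.
  exists N => n /dN de_q; have [[S S_cov] c_lt] := c_cov n.
  exact: vanishes_below_squeeze (cover_sum_ge0 S_cov) (or_introl c_lt) de_q.
have [total [c_total _]] := tends0_series_cvg c0.
have U_total := cover_sums_sub UD (cover_sums_bigcup (fun N => (c_cov N).1) c_total).
have total_le : lc_le total (lc_add lam E).
  apply: (cvg_eps_le (psum_le (fun n => or_introl (c_cov n).2)) c_total).
  by apply: (cvg_eps_congr (cvg_eps_add d_lam ep_E)) => n; rewrite psum_add.
have : lc_lt (lc_add lam E) m' by lc_transport (llt_addl lam E_small).
by move=> /(lle_lt_trans total_le) /llt_not_le; apply; exact: m'_lb.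
Qed.

End Exhaustion.

Section CountableUnion.
Variable R : realType.
Local Notation LC := (LC R).
Variable A : nat -> set LC.
Hypothesis A_meas : forall n, L_measurable (A n).

Definition union_upto N := \bigcup_(n in [set k | (k <= N)%N]) A n.

Definition fresh N := if N is k.+1 then A k.+1 `&` ~` union_upto k else A 0.

Lemma union_upto0 : union_upto 0 = A 0.
Proof.
apply/seteqP; split => [x [n /=]|x A0x]; last by exists 0%N.
by rewrite leqn0 => /eqP ->.
Qed.

Lemma union_uptoS N : union_upto N.+1 = union_upto N `|` A N.+1.
Proof.
apply/seteqP; split => [x [n /= + Anx]|x [[n /= nN Anx]|ANx]].
- by rewrite leq_eqVlt => /orP [/eqP <-|nN]; [right|left; exists n].
- by exists n => //=; exact: leq_trans nN (leqnSn N).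
- by exists N.+1 => /=.
Qed.

Lemma union_upto_sub N : union_upto N `<=` \bigcup_n A n.
Proof. by move=> x [n _ Anx]; exists n. Qed.

Lemma fresh_sub N : fresh N `<=` union_upto N.
Proof.
case: N => [|k] x /=; first by rewrite union_upto0.
by move=> [Ax _]; rewrite union_uptoS; right.
Qed.

Lemma bigcup_fresh : \bigcup_n A n `<=` \bigcup_N fresh N.
Proof.
move=> x [n _ Anx]; elim/ltn_ind: n Anx => n IH Anx.
case: (pselect (exists2 k, (k < n)%N & A k x)) => [[k kn Akx]|none].
  exact: IH kn Akx.
exists n => //; case: n {IH} Anx none => [//|k] Anx none /=.
by split => // -[j /= jk Ajx]; apply: none; exists j.
Qed.

Lemma split_step B mB N p q :
  outer_measure B mB -> outer_measure (union_upto N `&` B) p ->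
  outer_measure (~` union_upto N `&` B) q -> mB = lc_add p q ->
  exists a r, [/\ outer_measure (fresh N.+1 `&` B) a,
    outer_measure (union_upto N.+1 `&` B) (lc_add p a),
    outer_measure (~` union_upto N.+1 `&` B) r & mB = lc_add (lc_add p a) r].
Proof.
move=> hB hp hq mB_pq; have [_ A_split] := A_meas N.+1.
have [a [r [ha [hr q_ar]]]] := A_split _ _ hq.
have fresh_eq : fresh N.+1 `&` B = A N.+1 `&` (~` union_upto N `&` B) by rewrite /= setIA.
have out_eq : ~` union_upto N.+1 `&` B = ~` A N.+1 `&` (~` union_upto N `&` B).
  by rewrite union_uptoS setCU [~` union_upto N `&` _]setIC setIA.
have mB_par : mB = lc_add (lc_add p a) r by rewrite mB_pq q_ar; lc_ring.
exists a, r; rewrite fresh_eq out_eq; split => //.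
apply: (outer_measure_squeeze hB hp ha hr mB_par) => x.
  by move=> Bx; case: (pselect (union_upto N.+1 x)) => Ux; [left|right; rewrite -out_eq].
move=> [+ Bx]; case: (pselect (union_upto N x)) => UNx; first by left.
by rewrite union_uptoS => -[//|ANx]; right.
Qed.

Lemma union_upto_split B mB : outer_measure B mB -> forall N, exists p q,
  [/\ outer_measure (union_upto N `&` B) p, outer_measure (~` union_upto N `&` B) q
    & mB = lc_add p q].
Proof.
move=> hB; elim=> [|N [p [q [hp hq mB_pq]]]].
  have [_ A0_split] := A_meas 0; have [m1 [m2 [h1 [h2 mB_m]]]] := A0_split _ _ hB.
  by rewrite union_upto0; exists m1, m2.
have [a [r [_ hpa hr mB_par]]] := split_step hB hp hq mB_pq.
by exists (lc_add p a), r.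
Qed.

Lemma fresh_increment B mB N p p' : outer_measure B mB ->
  outer_measure (union_upto N `&` B) p -> outer_measure (union_upto N.+1 `&` B) p' ->
  outer_measure (fresh N.+1 `&` B) (lc_sub p' p).
Proof.
move=> hB hp hp'; have [p0 [q [hp0 hq mB_pq]]] := union_upto_split hB N.
have [a [r [ha hpa _ _]]] := split_step hB hp0 hq mB_pq.
rewrite (outer_measure_uniq hp' hpa) (outer_measure_uniq hp hp0).
by have -> : lc_sub (lc_add p0 a) p0 = a by lc_ring.
Qed.

Section Measures.
Variables (mN : nat -> LC) (L : LC).
Hypothesis mN_meas : forall N, outer_measure (union_upto N) (mN N).
Hypothesis mN_L : cvg_eps mN L.

Lemma fresh_measure N : outer_measure (fresh N) (increments mN N).
Proof.
case: N => [|k]; first by rewrite /= -union_upto0.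
have U_mono : union_upto k `<=` union_upto k.+1 by rewrite union_uptoS; exact: subsetUl.
rewrite -(setIidl (@fresh_sub k.+1)).
apply: (fresh_increment (mN_meas k.+1) (p := mN k) (p' := mN k.+1)).
  by rewrite (setIidl U_mono).
by rewrite setIid.
Qed.

Lemma outer_measure_bigcup : outer_measure (\bigcup_n A n) L.
Proof.
apply: (outer_measure_exhaustion mN_meas _ bigcup_fresh fresh_measure _ mN_L).
  by move=> N; exact: union_upto_sub.
exact/increments_seriesP.
Qed.

(* The traces of the finite unions on a test set have convergent measures:
   their increments are squeezed by those of mN. *)
Lemma trace_measures_cvg B mB (p : nat -> LC) : outer_measure B mB ->
  (forall N, outer_measure (union_upto N `&` B) (p N)) -> exists lam, cvg_eps p lam.
Proof.
move=> hB hp.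
have inc_p N : outer_measure (fresh N.+1 `&` B) (increments p N.+1).
  exact: fresh_increment hB (hp N) (hp N.+1).
have inc_le N : lc_le (increments p N.+1) (increments mN N.+1).
  exact: outer_measure_mono (@subIsetl _ _ B) (inc_p N) (fresh_measure N.+1).
have inc0 : tends0 (increments p).
  move=> q; have [N mN_q] := cvg_eps_diff mN_L q; exists N.+1 => -[//|n] n_big.
  exact: vanishes_below_squeeze (outer_measure_ge0 (inc_p n)) (inc_le n) (mN_q n n_big).
have [lam [lam_cvg _]] := tends0_series_cvg inc0.
by exists lam; apply/increments_seriesP.
Qed.

Lemma bigcup_split B mB : outer_measure B mB ->
  exists m1 m2, outer_measure ((\bigcup_n A n) `&` B) m1 /\
    outer_measure (~` (\bigcup_n A n) `&` B) m2 /\ mB = lc_add m1 m2.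
Proof.
move=> hB; have /choice [p hpq] := union_upto_split hB.
have hp N : outer_measure (union_upto N `&` B) (p N) by have [q []] := hpq N.
have hq N : outer_measure (~` union_upto N `&` B) (lc_sub mB (p N)).
  have [q [_ hq ->]] := hpq N.
  by have -> : lc_sub (lc_add (p N) q) (p N) = q by lc_ring.
have [lam p_lam] := trace_measures_cvg hB hp.
have hm1 : outer_measure ((\bigcup_n A n) `&` B) lam.
  apply: (outer_measure_exhaustion (P := fun N => union_upto N `&` B)
    (D := fun N => fresh N `&` B) (d := increments p) hp _ _ _ _ p_lam).
  - by move=> N; exact: setSI (@union_upto_sub N).
  - by move=> x [/bigcup_fresh [N _ fx] Bx]; exists N.
  - by case=> [|k]; [rewrite /= -union_upto0; exact: hp|exact: fresh_increment hB (hp k) (hp k.+1)].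
  - exact/increments_seriesP.
exists lam, (lc_sub mB lam); do 2 split => //; last by lc_ring.
apply: outer_measure_complement hB hm1 _ hq p_lam => N.
exact: setSI (subsetC (@union_upto_sub N)).
Qed.

End Measures.
End CountableUnion.

Theorem mainTheorem19 (R : realType) (A : nat -> set (LC R))
  (hA : forall n : nat, L_measurable (A n))
  (hlim : exists (mN : nat -> LC R) (L : LC R),
     (forall N : nat, outer_measure (\bigcup_(n in [set k | (k <= N)%N]) A n) (mN N)) /\
     lc_cvg mN L) :
  L_measurable (\bigcup_n A n).
Proof.
have [mN [L [mN_meas /lc_cvgP mN_L]]] := hlim.
split=> [|B mB hB]; last exact (bigcup_split hA mN_meas mN_L hB).
by exists L; exact (outer_measure_bigcup hA mN_meas mN_L).
Qed.
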